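(* Let $r\ge 0$ and consider the $U_q(\mathfrak{sl}_2)$-module $M(\lambda)\otimes V^{\otimes r}$ over $\mathbb{Q}(q,\lambda)$. For $\rho=(b_0,b_1,\dots,b_r)\in\mathbb{N}^{r+1}$ put \[ v_\rho := F^{b_r}\Big(\cdots F^{b_1}\big(F^{b_0}(v_{\lambda,0})\otimes v_{1,0}\big)\cdots\otimes v_{1,0}\Big). \] Then: (1) For $r\ge 2$ and $1\le i\le r-1$, the map $\mathrm{cap}_i:=\mathrm{id}_{M(\lambda)}\otimes\mathrm{id}_V^{\otimes(i-1)}\otimes\cap\otimes\mathrm{id}_V^{\otimes(r-i-1)}:M(\lambda)\otimes V^{\otimes r}\to M(\lambda)\otimes V^{\otimes (r-2)}$ (the cap applied to the $i$-th and $(i+1)$-th tensor factors $V$) satisfies \[ \mathrm{cap}_i\big(v_{(\dots,b_{i-1},b_i,b_{i+1},b_{i+2},\dots)}\big)=-q^{-1}[b_i]_q\,v_{(\dots,b_{i-1}+b_i+b_{i+1}-1,b_{i+2},\dots)} \] (entries not displayed are unchanged). (2) For $1\le i\le r+1$, the map $\mathrm{cup}_i:=\mathrm{id}_{M(\lambda)}\otimes\mathrm{id}_V^{\otimes(i-1)}\otimes\cup\otimes\mathrm{id}_V^{\otimes(r-i+1)}:M(\lambda)\otimes V^{\otimes r}\to M(\lambda)\otimes V^{\otimes (r+2)}$ (inserting two new tensor factors $V$ in positions $i,i+1$) satisfies \[ \mathrm{cup}_i(v_\rho)=q[2]_q\,v_{(\dots,b_{i-1},1,0,b_i,\dots)}-q\,v_{(\dots,b_{i-1}+1,0,0,b_i,\dots)}-q\,v_{(\dots,b_{i-1},0,1,b_i,\dots)}.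 \] (3) For $r\ge1$, the map $\xi\otimes\mathrm{id}_V^{\otimes(r-1)}$ satisfies \[ v_{(b_0,b_1,\dots)}\mapsto\big(\lambda^{-1}q^{b_0}-\lambda q[b_0]_q\big)v_{(0,b_0+b_1,\dots)}+\lambda q^2[b_0]_q\,v_{(1,b_0+b_1-1,\dots)}. \]
   Context: $U_q(\mathfrak{sl}_2)$ is the $\mathbb{Q}(q)$-algebra generated by $K^{\pm1},E,F$ with $KE=q^2EK$, $KF=q^{-2}FK$, $KK^{-1}=1=K^{-1}K$, $EF-FE=\frac{K-K^{-1}}{q-q^{-1}}$, acting on tensor products via $\Delta(K^{\pm1})=K^{\pm1}\otimes K^{\pm1}$, $\Delta(E)=E\otimes 1+K^{-1}\otimes E$, $\Delta(F)=F\otimes K+1\otimes F$. Quantum integers: $[n]_q=\frac{q^n-q^{-n}}{q-q^{-1}}$; for a formal variable $\lambda$ ($=q^\beta$), $[\beta+k]_q=\frac{\lambda q^k-\lambda^{-1}q^{-k}}{q-q^{-1}}$. The universal Verma module $M(\lambda)$ has $\mathbb{Q}(q,\lambda)$-basis $v_{\lambda,i}$ ($i\ge0$) with $Kv_{\lambda,i}=\lambda q^{-2i}v_{\lambda,i}$, $Fv_{\lambda,i}=v_{\lambda,i+1}$, $Ev_{\lambda,i}=[i]_q[\beta-i+1]_qv_{\lambda,i-1}$. $V$ is the $2$-dimensional module with basis $v_{1,0},v_{1,1}$, $Kv_{1,j}=q^{1-2j}v_{1,j}$, $Fv_{1,0}=v_{1,1}$, $Fv_{1,1}=0$, $Ev_{1,1}=v_{1,0}$,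 $Ev_{1,0}=0$. The maps $\cap:V\otimes V\to\mathbb{Q}(q,\lambda)$ and $\cup:\mathbb{Q}(q,\lambda)\to V\otimes V$ are $\cap(v_{1,0}\otimes v_{1,0})=\cap(v_{1,1}\otimes v_{1,1})=0$, $\cap(v_{1,0}\otimes v_{1,1})=1$, $\cap(v_{1,1}\otimes v_{1,0})=-q^{-1}$, and $\cup(1)=-q\,v_{1,0}\otimes v_{1,1}+v_{1,1}\otimes v_{1,0}$. The map $\xi:M(\lambda)\otimes V\to M(\lambda)\otimes V$ is given by $\xi(v_{\lambda,k}\otimes v_{1,0})=\lambda^{-1}q^{2k}v_{\lambda,k}\otimes v_{1,0}-q(q-q^{-1})[k]_q[\beta-k+1]_qv_{\lambda,k-1}\otimes v_{1,1}$ and $\xi(v_{\lambda,k}\otimes v_{1,1})=(\lambda^{-1}+\lambda q^2-\lambda^{-1}q^{2(k+1)})v_{\lambda,k}\otimes v_{1,1}-\lambda^{-1}q^{2(k+1)}(q-q^{-1})v_{\lambda,k+1}\otimes v_{1,0}$. In the formulas, when $i=1$ the entry $b_{i-1}$ is $b_0$; terms with coefficient $[0]_q=0$ are zero. *)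

From HB Require Import structures.
From mathcomp Require Import all_boot all_order all_algebra.
From mathcomp Require Export fraction.
Set Implicit Arguments. Unset Strict Implicit. Unset Printing Implicit Defensive.
Import Order.TTheory GRing.Theory Num.Theory.
Local Open Scope ring_scope.

Definition Fql : fieldType := {fraction {poly {poly rat}}}.
(* q is the inner variable, lambda (= q^beta) the outer one *)
Definition qv : Fql := FracField.tofrac (('X : {poly rat})%:P).
Definition lamv : Fql := FracField.tofrac ('X : {poly {poly rat}}).

Section Model.
Variables (F : fieldType) (q lam : F).

Definition qint (n : nat) : F := (q ^+ n - q ^- n) / (q - q^-1).
Definition qintb (k : int) : F := (lam * q ^ k - lam^-1 * q ^ (- k)) / (q - q^-1).

(* Basis of M(lambda) (x) V^{(x) s}: v_{lambda,k} (x) v_{1,j_1} (x) ... (x) v_{1,j_s},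
   encoded as (k, [:: j_1; ...; j_s]) with j = false for v_{1,0}, true for v_{1,1}. *)
Definition basis := (nat * seq bool)%type.
(* Vectors are finite formal linear combinations of basis vectors;
   two vectors are equal iff all their coefficients agree (veq). *)
Definition vec := seq (F * basis).
Definition coef (x : vec) (b : basis) : F := \sum_(p <- x | p.2 == b) p.1.
Definition veq (x y : vec) : Prop := forall b, coef x b = coef y b.
Definition vscale (c : F) (x : vec) : vec := [seq (c * p.1, p.2) | p <- x].
Definition vadd (x y : vec) : vec := x ++ y.
Definition lin (f : basis -> vec) (x : vec) : vec :=
  flatten [seq vscale p.1 (f p.2) | p <- x].

(* K-eigenvalue of a tensor of V-basis vectors: K v_{1,j} = q^{1-2j} v_{1,j} *)
Definition Kw (js : seq bool) : F := \prod_(j <- js) (if j then q^-1 else q).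

(* action of F via the iterated coproduct Delta(F) = F (x) K + 1 (x) F:
   F acting on factor p, K on all factors to the right of p *)
Definition Fbasis (b : basis) : vec :=
  (Kw b.2, (b.1.+1, b.2)) ::
  [seq (Kw (drop i.+1 b.2), (b.1, set_nth false b.2 i true))
    | i <- iota 0 (size b.2) & ~~ nth false b.2 i].
Definition Fop : vec -> vec := lin Fbasis.

Definition tens0 (x : vec) : vec := [seq (p.1, (p.2.1, rcons p.2.2 false)) | p <- x].

Definition vrho (rho : seq nat) : vec :=
  match rho with
  | [::] => [::]
  | b0 :: bs => foldl (fun x b => iter b Fop (tens0 x))
                      (iter b0 Fop [:: (1, (0%N, [::]))]) bs
  end.

Definition capv (a b : bool) : F :=
  match a, b with false, true => 1 | true, false => - q^-1 | _, _ => 0 end.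
(* cap_i: cap on the i-th and (i+1)-th V factors (1-indexed) *)
Definition cap_basis (i : nat) (b : basis) : vec :=
  [:: (capv (nth false b.2 i.-1) (nth false b.2 i),
       (b.1, take i.-1 b.2 ++ drop i.+1 b.2))].
Definition capi (i : nat) : vec -> vec := lin (cap_basis i).

(* cup_i: insert cup(1) = -q v_{1,0}(x)v_{1,1} + v_{1,1}(x)v_{1,0}
   as the new V factors in positions i, i+1 (1-indexed) *)
Definition cup_basis (i : nat) (b : basis) : vec :=
  [:: (- q, (b.1, take i.-1 b.2 ++ [:: false; true] ++ drop i.-1 b.2));
      (1, (b.1, take i.-1 b.2 ++ [:: true; false] ++ drop i.-1 b.2))].
Definition cupi (i : nat) : vec -> vec := lin (cup_basis i).

Definition xi_basis (b : basis) : vec :=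
  let k := b.1 in
  match b.2 with
  | [::] => [::]
  | j :: js =>
    if j then
      [:: (lam^-1 + lam * q ^+ 2 - lam^-1 * q ^+ (2 * k.+1), (k, true :: js));
          (- (lam^-1 * q ^+ (2 * k.+1) * (q - q^-1)), (k.+1, false :: js))]
    else
      [:: (lam^-1 * q ^+ (2 * k), (k, false :: js));
          (- (q * (q - q^-1) * qint k * qintb (1 - k%:Z)), (k.-1, true :: js))]
  end.
Definition xi_id : vec -> vec := lin xi_basis.

End Model.

From Pilot Require Import Defs.
From HB Require Import structures.
From mathcomp Require Import all_boot all_order all_algebra.
From mathcomp Require Import ring zify.
From Stdlib Require Import FunctionalExtensionality.
Set Implicit Arguments. Unset Strict Implicit. Unset Printing Implicit Defensive.
Import GRing.Theory.
Local Open Scope ring_scope.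

(* Vectors are compared through the pairing [vdot x g] with test functions
   [g : basis -> F], which determines a vector up to [veq]; the linear extension
   [lin f] then acts on test functions by its adjoint.  The maps cap, cup and xi
   are U_q-module maps on the tensor factors they touch, so their adjoints
   commute with the adjoint of F and with appending a factor v_{1,0} further to
   the right: on v_rho they only meet the vector built from the first few
   entries of rho.  There the coproduct gives
     F^n (x (x) v_{1,0}) = q^n F^n x (x) v_{1,0} + [n]_q F^(n-1) x (x) v_{1,1},
     F^n (x (x) v_{1,1}) = q^-n F^n x (x) v_{1,1},
   and each identity becomes one between rational functions of q and lambda. *)

Section Pairing.
Variable F : fieldType.
Implicit Types (x y : vec F) (g h : basis -> F) (f : basis -> vec F).

Definition vdot x g : F := \sum_(p <- x) p.1 * g p.2.
Definition adjoint f g : basis -> F := fun b => vdot (f b) g.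
Definition tens_adj (j : bool) g : basis -> F := fun b => g (b.1, b.2 ++ [:: j]).

Lemma vdot_cons p x g : vdot (p :: x) g = p.1 * g p.2 + vdot x g.
Proof. by rewrite /vdot big_cons. Qed.

Lemma vdot_cat x y g : vdot (x ++ y) g = vdot x g + vdot y g.
Proof. by rewrite /vdot big_cat. Qed.

Lemma vdot_scale c x g : vdot (vscale c x) g = c * vdot x g.
Proof.
by rewrite /vdot big_map mulr_sumr; apply: eq_bigr => p _; rewrite mulrA.
Qed.

Lemma vdot_lin f x g : vdot (lin f x) g = vdot x (adjoint f g).
Proof.
elim: x => [|p x IHx]; first by rewrite /vdot !big_nil.
by rewrite /lin /= vdot_cat vdot_scale -/(lin f x) IHx vdot_cons.
Qed.

Lemma vdot_tens0 x g : vdot (tens0 x) g = vdot x (tens_adj false g).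
Proof. by rewrite /vdot big_map; apply: eq_bigr => p _; rewrite /tens_adj cats1. Qed.

Lemma vdotD x g h : vdot x (fun b => g b + h b) = vdot x g + vdot x h.
Proof. by rewrite /vdot -big_split; apply: eq_bigr => p _ /=; rewrite mulrDr. Qed.

Lemma vdot_scaler x a g : vdot x (fun b => a * g b) = a * vdot x g.
Proof. by rewrite /vdot mulr_sumr; apply: eq_bigr => p _ /=; ring. Qed.

Lemma vdot0 x : vdot x (fun=> 0) = 0.
Proof. by rewrite /vdot big1 // => p _; rewrite mulr0. Qed.

(* Testing against the indicator of [b] recovers [coef x b]. *)
Lemma veq_vdot x y : (forall g, vdot x g = vdot y g) -> veq x y.
Proof.
move=> xy b; have coefE z : coef z b = vdot z (fun c => (c == b)%:R).
  rewrite /coef /vdot big_mkcond; apply: eq_bigr => p _.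
  by case: eqP; rewrite ?mulr1 ?mulr0.
by rewrite !coefE xy.
Qed.

Lemma adjoint_lincomb f a c g h :
  adjoint f (fun b => a * g b + c * h b) = fun b => a * adjoint f g b + c * adjoint f h b.
Proof. by apply: functional_extensionality => b; rewrite /adjoint vdotD !vdot_scaler. Qed.

Lemma adjoint_scaler f a g :
  adjoint f (fun b => a * g b) = fun b => a * adjoint f g b.
Proof. by apply: functional_extensionality => b; apply: vdot_scaler. Qed.

Lemma iter_adjoint_scaler n f a g :
  iter n (adjoint f) (fun b => a * g b) = fun b => a * iter n (adjoint f) g b.
Proof. by elim: n => //= n ->; rewrite adjoint_scaler. Qed.

Lemma iter_adjoint0 n f : iter n (adjoint f) (fun=> 0) = fun=> 0.
Proof.
elim: n => //= n ->; apply: functional_extensionality => b; exact: vdot0.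
Qed.

Definition homog n x := all (fun p => size p.2.2 == n) x.
Definition size_preserving f := forall b, homog (size b.2) (f b).

Lemma eq_vdot_homog n x g h : homog n x ->
  (forall b, size b.2 = n -> g b = h b) -> vdot x g = vdot x h.
Proof.
move=> /allP xn gh; rewrite /vdot !big_seq; apply: eq_bigr => p /xn /eqP pn.
by rewrite gh.
Qed.

Lemma homog_lin n f x : size_preserving f -> homog n x -> homog n (lin f x).
Proof.
move=> fP; elim: x => [|p x IHx] //= /andP[/eqP pn xn].
change (homog n (vscale p.1 (f p.2) ++ lin f x)).
rewrite /homog all_cat -/(homog n (lin f x)) IHx // andbT all_map.
by have := fP p.2; rewrite pn.
Qed.

Lemma homog_tens0 n x : homog n x -> homog n.+1 (tens0 x).
Proof.
by rewrite /homog all_map => /allP xn; apply/allP => p /xn /eqP /= pn; rewrite size_rcons pn.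
Qed.

Lemma eq_adjoint_on (P : pred nat) f g h : size_preserving f ->
  (forall b, P (size b.2) -> g b = h b) ->
  forall b, P (size b.2) -> adjoint f g b = adjoint f h b.
Proof.
by move=> fP gh b Pb; apply: (eq_vdot_homog (fP b)) => c cb; apply: gh; rewrite cb.
Qed.

Lemma eq_iter_adjoint_on (P : pred nat) n f g h : size_preserving f ->
  (forall b, P (size b.2) -> g b = h b) ->
  forall b, P (size b.2) -> iter n (adjoint f) g b = iter n (adjoint f) h b.
Proof. by move=> fP gh; elim: n => //= n IHn; apply: eq_adjoint_on. Qed.

End Pairing.

Notation Fadj q := (adjoint (Fbasis q)).

Section FAction.
Variables (F : fieldType) (q : F).
Implicit Types (g h : basis -> F) (x : vec F).

Lemma vdot_iter_Fop n x g : vdot (iter n (Fop q) x) g = vdot x (iter n (Fadj q) g).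
Proof. by elim: n g => //= n IHn g; rewrite vdot_lin IHn -iterSr. Qed.

Lemma size_preserving_Fbasis : size_preserving (Fbasis q).
Proof.
move=> b; rewrite /homog /= eqxx all_map; apply/allP => i.
rewrite mem_filter mem_iota add0n => /and3P[_ _ ib] /=.
by rewrite size_set_nth; apply/eqP/maxn_idPr.
Qed.

Lemma homog_iter_Fop n k x : homog k x -> homog k (iter n (Fop q) x).
Proof.
by elim: n => //= n IHn xk; apply: homog_lin (IHn xk); apply: size_preserving_Fbasis.
Qed.

Local Notation attach := (fun x b => iter b (Fop q) (tens0 x)).

Fixpoint tail_adj (s : seq nat) g : basis -> F :=
  if s is b :: s' then tens_adj false (iter b (Fadj q) (tail_adj s' g)) else g.

Lemma vdot_foldl_attach s x g : vdot (foldl attach x s) g = vdot x (tail_adj s g).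
Proof. by elim: s x => //= b s IHs x; rewrite IHs vdot_iter_Fop vdot_tens0. Qed.

Lemma vrho_cat s t : s != [::] -> vrho q (s ++ t) = foldl attach (vrho q s) t.
Proof. by case: s => // b s _; rewrite /= foldl_cat. Qed.

Lemma vrho_rcons_add s a c :
  vrho q (rcons s (a + c)%N) = iter c (Fop q) (vrho q (rcons s a)).
Proof. by case: s => [|b s] /=; rewrite ?foldl_rcons /= addnC iterD. Qed.

Lemma vdot_vrho b s g : vdot (vrho q (b :: s)) g = iter b (Fadj q) (tail_adj s g) (0%N, [::]).
Proof.
by rewrite /= vdot_foldl_attach vdot_iter_Fop /vdot big_seq1 mul1r.
Qed.

Lemma homog_foldl_attach s n x :
  homog n x -> homog (n + size s)%N (foldl attach x s).
Proof.
elim: s n x => [|c s IHs] n x xn /=; first by rewrite addn0.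
by rewrite addnS -addSn; apply/IHs/homog_iter_Fop/homog_tens0.
Qed.

Lemma homog_vrho s : homog (size s).-1 (vrho q s).
Proof.
by case: s => // b s; rewrite /= -[size s]add0n; apply/homog_foldl_attach/homog_iter_Fop.
Qed.

Lemma eq_vdot_vrho s g h : (forall b, size b.2 = (size s).-1 -> g b = h b) ->
  vdot (vrho q s) g = vdot (vrho q s) h.
Proof. exact: eq_vdot_homog (homog_vrho s). Qed.

Implicit Types (u : seq bool -> F).

Definition raise_sum (js : seq bool) u : F :=
  \sum_(m <- iota 0 (size js) | ~~ nth false js m)
     Kw q (drop m.+1 js) * u (set_nth false js m true).

Lemma Fadj_E g k js :
  Fadj q g (k, js) = Kw q js * g (k.+1, js) + raise_sum js (fun a => g (k, a)).
Proof. by rewrite /adjoint /Fbasis vdot_cons /vdot big_map big_filter. Qed.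

Lemma Kw_cons j js : Kw q (j :: js) = (if j then q^-1 else q) * Kw q js.
Proof. by rewrite /Kw big_cons. Qed.

Lemma Kw_cat js ks : Kw q (js ++ ks) = Kw q js * Kw q ks.
Proof. by rewrite /Kw big_cat. Qed.

Lemma raise_sum_cons j js u : raise_sum (j :: js) u =
  (if j then 0 else Kw q js * u (true :: js)) + raise_sum js (fun a => u (j :: a)).
Proof.
rewrite /raise_sum /= big_cons -[1%N]/(1 + 0)%N iotaDl big_map.
by case: j; rewrite /= ?add0r ?drop0.
Qed.

Lemma raise_sum_cat js ks u : raise_sum (js ++ ks) u =
  Kw q ks * raise_sum js (fun a => u (a ++ ks)) + raise_sum ks (fun a => u (js ++ a)).
Proof.
elim: js u => [|j js IHjs] u /=; first by rewrite /raise_sum big_nil mulr0 add0r.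
by rewrite !raise_sum_cons IHjs Kw_cat; case: j; ring.
Qed.

Lemma raise_sumD js u1 u2 :
  raise_sum js (fun w => u1 w + u2 w) = raise_sum js u1 + raise_sum js u2.
Proof. by rewrite /raise_sum -big_split; apply: eq_bigr => m _ /=; rewrite mulrDr. Qed.

Lemma raise_sum_scaler js a u : raise_sum js (fun w => a * u w) = a * raise_sum js u.
Proof. by rewrite /raise_sum !mulr_sumr; apply: eq_bigr => m _ /=; ring. Qed.

Lemma eq_raise_sum js u1 u2 : (forall w, size w = size js -> u1 w = u2 w) ->
  raise_sum js u1 = raise_sum js u2.
Proof.
elim: js u1 u2 => [|j js IHjs] u1 u2 u12; first by rewrite /raise_sum !big_nil.
rewrite !raise_sum_cons u12 ?(IHjs (fun w => u1 (j :: w)) (fun w => u2 (j :: w))) //.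
by move=> w wjs; apply: u12; rewrite /= wjs.
Qed.

Lemma iter_Fadj_nil n g k : iter n (Fadj q) g (k, [::]) = g ((k + n)%N, [::]).
Proof.
elim: n k => [|n IHn] k /=; first by rewrite addn0.
by rewrite Fadj_E /Kw big_nil /raise_sum big_nil mul1r addr0 IHn addSnnS.
Qed.

Lemma Fadj_tens0 g :
  tens_adj false (Fadj q g) = fun b => q * Fadj q (tens_adj false g) b + tens_adj true g b.
Proof.
apply: functional_extensionality => -[k js]; rewrite /tens_adj /= !Fadj_E.
by rewrite raise_sum_cat raise_sum_cons /raise_sum big_nil Kw_cat Kw_cons /Kw big_nil /=; ring.
Qed.

Lemma Fadj_cat0 g k js :
  Fadj q g (k, js ++ [:: false]) = q * Fadj q (tens_adj false g) (k, js) + g (k, js ++ [:: true]).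
Proof. exact: (congr1 (fun G => G (k, js)) (Fadj_tens0 g)). Qed.

Lemma Fadj_tens1 g : tens_adj true (Fadj q g) = fun b => q^-1 * Fadj q (tens_adj true g) b.
Proof.
apply: functional_extensionality => -[k js]; rewrite /tens_adj /= !Fadj_E.
by rewrite raise_sum_cat raise_sum_cons /raise_sum big_nil Kw_cat Kw_cons /Kw big_nil /=; ring.
Qed.

End FAction.

Lemma qint0 (F : fieldType) (q : F) : qint q 0 = 0.
Proof. by rewrite /qint expr0 invr1 subrr mul0r. Qed.

Section Coproduct.
Variables (F : fieldType) (q : F).
Hypothesis qdiff : q - q^-1 != 0.
Implicit Types (g : basis -> F).

Lemma q_neq0 : q != 0.
Proof. by apply: contraNneq qdiff => ->; rewrite invr0 subrr. Qed.

Lemma sqr_q_sub1_neq0 : q * q - 1 != 0.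
Proof.
apply: contraNneq qdiff => qq1; have -> : q - q^-1 = (q * q - 1) / q.
  by field; rewrite q_neq0.
by rewrite qq1 mul0r.
Qed.

Lemma qintS n : qint q n.+1 = q * qint q n + q^-1 ^+ n.
Proof.
have qn : q ^+ n != 0 by rewrite expf_neq0 ?q_neq0.
by rewrite /qint exprVn exprS; field; rewrite qn q_neq0 sqr_q_sub1_neq0.
Qed.

Lemma qint2 : qint q 2 = q + q^-1.
Proof. by rewrite /qint; field; rewrite q_neq0 sqr_q_sub1_neq0. Qed.

Lemma iter_Fadj_tens1 n g :
  tens_adj true (iter n (Fadj q) g) = fun b => q^-1 ^+ n * iter n (Fadj q) (tens_adj true g) b.
Proof.
elim: n => [|n IHn] /=.
  by apply: functional_extensionality => b; rewrite expr0 mul1r.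
rewrite Fadj_tens1 IHn adjoint_scaler; apply: functional_extensionality => b.
by rewrite exprS mulrA.
Qed.

Lemma iter_Fadj_tens0 n g :
  tens_adj false (iter n (Fadj q) g) = fun b =>
    q ^+ n * iter n (Fadj q) (tens_adj false g) b +
    qint q n * iter n.-1 (Fadj q) (tens_adj true g) b.
Proof.
elim: n => [|n IHn] /=.
  by apply: functional_extensionality => b; rewrite qint0 expr0 mul1r mul0r addr0.
rewrite Fadj_tens0 IHn adjoint_lincomb iter_Fadj_tens1; apply: functional_extensionality => b.
rewrite qintS; case: n {IHn} => [|n] /=; first by rewrite qint0 expr1; ring.
by rewrite !exprS; ring.
Qed.

Lemma iter_Fadj_single0 n g k : iter n (Fadj q) g (k, [:: false]) =
  q ^+ n * g ((k + n)%N, [:: false]) + qint q n * g ((k + n.-1)%N, [:: true]).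
Proof.
by have := congr1 (fun G => G (k, [::])) (iter_Fadj_tens0 n g); rewrite /= !iter_Fadj_nil.
Qed.

Lemma iter_Fadj_single1 n g k :
  iter n (Fadj q) g (k, [:: true]) = q^-1 ^+ n * g ((k + n)%N, [:: true]).
Proof.
by have := congr1 (fun G => G (k, [::])) (iter_Fadj_tens1 n g); rewrite /= !iter_Fadj_nil.
Qed.

End Coproduct.

Section Intertwining.
Variables (F : fieldType) (q : F) (T : (basis -> F) -> basis -> F) (m : nat).
Hypothesis Fadj_T :
  forall g b, (m <= size b.2)%N -> Fadj q (T g) b = T (Fadj q g) b.
Hypothesis tens_adj_T :
  forall g b, (m <= size b.2)%N -> tens_adj false (T g) b = T (tens_adj false g) b.

Lemma iter_Fadj_T n g b :
  (m <= size b.2)%N -> iter n (Fadj q) (T g) b = T (iter n (Fadj q) g) b.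
Proof.
elim: n b => //= n IHn b mb; rewrite -Fadj_T //.
exact: (eq_adjoint_on (P := fun s => (m <= s)%N) (size_preserving_Fbasis q)).
Qed.

Lemma tail_adj_T s g b :
  (m <= size b.2)%N -> tail_adj q s (T g) b = T (tail_adj q s g) b.
Proof.
elim: s g b => //= c s IHs g b mb; rewrite -tens_adj_T // /tens_adj.
have mb1 : (m <= size (b.2 ++ [:: false]))%N by rewrite size_cat addn1 ltnW.
rewrite -iter_Fadj_T //.
apply: (eq_iter_adjoint_on (P := fun s => (m <= s)%N) _ (size_preserving_Fbasis q)) => //.
by move=> d md; apply: IHs.
Qed.

Lemma iter_tail_adj_T n s g b : (m <= size b.2)%N ->
  iter n (Fadj q) (tail_adj q s (T g)) b = T (iter n (Fadj q) (tail_adj q s g)) b.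
Proof.
move=> mb; rewrite -iter_Fadj_T //.
apply: (eq_iter_adjoint_on (P := fun s => (m <= s)%N) _ (size_preserving_Fbasis q)) => //.
by move=> d md; apply: tail_adj_T.
Qed.

End Intertwining.

Lemma split_at2 n (js : seq bool) : (n.+2 <= size js)%N ->
  exists A a b B, size A = n /\ js = A ++ a :: b :: B.
Proof.
move=> njs; exists (take n js).
have : (2 <= size (drop n js))%N by rewrite size_drop; lia.
case E: (drop n js) => [|a [|b B]] // _; exists a, b, B.
by rewrite -E cat_take_drop size_takel //; lia.
Qed.

Lemma split_at n (js : seq bool) : (n <= size js)%N ->
  exists A B, size A = n /\ js = A ++ B.
Proof. by move=> njs; exists (take n js), (drop n js); rewrite cat_take_drop size_takel. Qed.

Section Cap.
Variables (F : fieldType) (q : F).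
Hypothesis qdiff : q - q^-1 != 0.
Implicit Types (g : basis -> F).

Local Notation cap_adj n := (adjoint (cap_basis q n)).

Lemma cap_adj_cat n g k A a b B : size A = n ->
  cap_adj n.+1 g (k, A ++ a :: b :: B) = Defs.capv q a b * g (k, A ++ B).
Proof.
move=> An; rewrite /adjoint /cap_basis /vdot big_seq1 /=.
rewrite nth_cat An ltnn subnn nth_cat An ltnNge leqnSn subSnn /=.
rewrite take_size_cat // -[A ++ a :: b :: B]/(A ++ [:: a; b] ++ B) catA.
by rewrite drop_size_cat // size_cat An addn2.
Qed.

Lemma Fadj_cap_adj n g c :
  (n.+2 <= size c.2)%N -> Fadj q (cap_adj n.+1 g) c = cap_adj n.+1 (Fadj q g) c.
Proof.
case: c => k js /= /split_at2[A [a [b [B [An ->]]]]].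
rewrite Fadj_E !cap_adj_cat // Fadj_E !raise_sum_cat !raise_sum_cons.
rewrite (@eq_raise_sum _ _ A _ (fun w => Defs.capv q a b * g (k, w ++ B))); last first.
  by move=> w wA; rewrite cap_adj_cat // wA.
have -> : (fun w => cap_adj n.+1 g (k, A ++ a :: b :: w)) =
    (fun w => Defs.capv q a b * g (k, A ++ w)).
  by apply: functional_extensionality => w; rewrite cap_adj_cat.
rewrite !raise_sum_scaler !cap_adj_cat // !Kw_cat !Kw_cons.
by case: a; case: b; rewrite /Defs.capv /=; field; rewrite q_neq0.
Qed.

Lemma tens_adj_cap_adj n g c : (n.+2 <= size c.2)%N ->
  tens_adj false (cap_adj n.+1 g) c = cap_adj n.+1 (tens_adj false g) c.
Proof.
case: c => k js /= /split_at2[A [a [b [B [An ->]]]]].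
by rewrite /tens_adj /= -catA /= !cap_adj_cat // catA.
Qed.

(* Only F^(b_i - 1) x (x) v_{1,1} (x) v_{1,0} survives the cap. *)
Lemma tail_adj_cap n bi bj s g c : size c.2 = n ->
  tail_adj q [:: bi, bj & s] (cap_adj n.+1 g) c =
  - q^-1 * qint q bi * iter (bi.-1 + bj) (Fadj q) (tail_adj q s g) c.
Proof.
move=> cn; rewrite /= iter_Fadj_tens0 //.
set G := tens_adj false (iter bj _ _).
have capE j d : size d.2 = n ->
    tens_adj j G d = Defs.capv q j false * iter bj (Fadj q) (tail_adj q s g) d.
  case: d => k w /= wn; rewrite /G /tens_adj /=.
  rewrite (iter_tail_adj_T (@Fadj_cap_adj n) (@tens_adj_cap_adj n)); last first.
    by rewrite /= !size_cat wn !addn1.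
  by rewrite -catA /= cap_adj_cat // cats0.
have onN (h1 h2 : basis -> F) m : (forall d, size d.2 = n -> h1 d = h2 d) ->
    iter m (Fadj q) h1 c = iter m (Fadj q) h2 c.
  move=> h12; apply: (eq_iter_adjoint_on (P := fun s => s == n) _ (size_preserving_Fbasis q)).
  - by move=> d /eqP; apply: h12.
  - exact/eqP.
rewrite (onN (tens_adj false G) (fun=> 0)); last by move=> d dn; rewrite capE // mul0r.
rewrite (onN (tens_adj true G) (fun d => - q^-1 * iter bj (Fadj q) (tail_adj q s g) d));
  last by move=> d dn; rewrite capE.
by rewrite iter_adjoint0 iter_adjoint_scaler iterD mulr0 add0r mulrA [qint q bi * _]mulrC.
Qed.

Lemma capi_vrho_cat P bh bi bj s :
  veq (capi q (size P).+1 (vrho q (P ++ [:: bh, bi, bj & s])))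
      (vscale (- q^-1 * qint q bi) (vrho q (P ++ (bh + bi + bj).-1 :: s))).
Proof.
apply: veq_vdot => g; rewrite vdot_scale vdot_lin.
rewrite -(cat_rcons bh) -(cat_rcons (_.-1)) !vrho_cat -?size_eq0 ?size_rcons // !vdot_foldl_attach.
rewrite (eq_vdot_vrho q (h := fun c => - q^-1 * qint q bi *
    iter (bi.-1 + bj) (Fadj q) (tail_adj q s g) c)); last first.
  by move=> c; rewrite size_rcons => cn; apply: tail_adj_cap.
rewrite vdot_scaler -vdot_iter_Fop -vrho_rcons_add.
by case: bi => [|bi]; rewrite ?qint0 ?mulr0 ?mul0r // addnS addSn /= addnA.
Qed.

Lemma capi_vrho r rho i :
  size rho = r.+1 -> (2 <= r)%N -> (1 <= i <= r - 1)%N ->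
  veq (capi q i (vrho q rho))
      (vscale (- q^-1 * qint q (nth 0%N rho i))
         (vrho q (take i.-1 rho ++
            (nth 0%N rho i.-1 + nth 0%N rho i + nth 0%N rho i.+1).-1 :: drop i.+2 rho))).
Proof.
move=> rho_r _ /andP[]; case: i => [|n] // _ nr /=.
have [n0 n1 n2] : [/\ n < size rho, n.+1 < size rho & n.+2 < size rho]%N.
  by rewrite rho_r; split; lia.
have := capi_vrho_cat (take n rho) (nth 0%N rho n) (nth 0%N rho n.+1)
  (nth 0%N rho n.+2) (drop n.+3 rho).
by rewrite (size_takel (ltnW n0)) -!drop_nth // cat_take_drop.
Qed.

End Cap.

Section Cup.
Variables (F : fieldType) (q : F).
Hypothesis qdiff : q - q^-1 != 0.
Implicit Types (g : basis -> F).

Local Notation cup_adj n := (adjoint (cup_basis q n)).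

Lemma cup_adj_cat n g k A B : size A = n ->
  cup_adj n.+1 g (k, A ++ B) =
  - q * g (k, A ++ [:: false, true & B]) + g (k, A ++ [:: true, false & B]).
Proof.
move=> An; rewrite /adjoint /cup_basis !vdot_cons /vdot big_nil addr0 mul1r /=.
by rewrite take_size_cat // drop_size_cat.
Qed.

Lemma Fadj_cup_adj n g c :
  (n <= size c.2)%N -> Fadj q (cup_adj n.+1 g) c = cup_adj n.+1 (Fadj q g) c.
Proof.
case: c => k js /= /split_at[A [B [An ->]]].
rewrite Fadj_E !cup_adj_cat // !Fadj_E !raise_sum_cat !raise_sum_cons /=.
rewrite (@eq_raise_sum _ _ A _ (fun w => - q * g (k, w ++ [:: false, true & B]) +
    g (k, w ++ [:: true, false & B]))); last by move=> w wA; rewrite cup_adj_cat // wA.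
have -> : (fun w => cup_adj n.+1 g (k, A ++ w)) = (fun w =>
    - q * g (k, A ++ [:: false, true & w]) + g (k, A ++ [:: true, false & w])).
  by apply: functional_extensionality => w; rewrite cup_adj_cat.
rewrite !raise_sumD !raise_sum_scaler !Kw_cat !Kw_cons /=.
by field; rewrite q_neq0.
Qed.

Lemma tens_adj_cup_adj n g c : (n <= size c.2)%N ->
  tens_adj false (cup_adj n.+1 g) c = cup_adj n.+1 (tens_adj false g) c.
Proof.
case: c => k js /= /split_at[A [B [An ->]]].
by rewrite /tens_adj /= -catA !cup_adj_cat // -!catA.
Qed.

Lemma tail_adj_cup n s g c : size c.2 = n ->
  tail_adj q s (cup_adj n.+1 g) c =
  q * qint q 2 * tail_adj q [:: 1%N, 0%N & s] g c +
  (- q * Fadj q (tail_adj q [:: 0%N, 0%N & s] g) c + - q * tail_adj q [:: 0%N, 1%N & s] g c).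
Proof.
case: c => k d /= dn.
rewrite (tail_adj_T (@Fadj_cup_adj n) (@tens_adj_cup_adj n)) ?dn // -[d]cats0 cup_adj_cat //.
rewrite !Fadj_tens0 /tens_adj /= Fadj_cat0 /tens_adj /= -!catA /= !cats0 qint2 //.
by field; rewrite q_neq0.
Qed.

Lemma cupi_vrho_cat P b s :
  veq (cupi q (size P).+1 (vrho q (P ++ b :: s)))
      (vadd (vscale (q * qint q 2) (vrho q (P ++ [:: b, 1%N, 0%N & s])))
      (vadd (vscale (- q) (vrho q (P ++ [:: b.+1, 0%N, 0%N & s])))
            (vscale (- q) (vrho q (P ++ [:: b, 0%N, 1%N & s]))))).
Proof.
apply: veq_vdot => g; rewrite !vdot_cat !vdot_scale vdot_lin.
rewrite -!(cat_rcons b) -(cat_rcons b.+1) !vrho_cat -?size_eq0 ?size_rcons //.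
rewrite -[b.+1]addn1 vrho_rcons_add !vdot_foldl_attach vdot_iter_Fop /=.
rewrite (eq_vdot_vrho q (h := fun c =>
  q * qint q 2 * tail_adj q [:: 1%N, 0%N & s] g c +
  (- q * Fadj q (tail_adj q [:: 0%N, 0%N & s] g) c + - q * tail_adj q [:: 0%N, 1%N & s] g c))).
  by rewrite !vdotD !vdot_scaler.
by move=> c; rewrite size_rcons => cn; apply: tail_adj_cup.
Qed.

Lemma cupi_vrho r rho i :
  size rho = r.+1 -> (1 <= i <= r + 1)%N ->
  veq (cupi q i (vrho q rho))
      (vadd (vscale (q * qint q 2) (vrho q (take i rho ++ 1%N :: 0%N :: drop i rho)))
      (vadd (vscale (- q) (vrho q (take i.-1 rho ++
                             (nth 0%N rho i.-1).+1 :: 0%N :: 0%N :: drop i rho)))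
            (vscale (- q) (vrho q (take i rho ++ 0%N :: 1%N :: drop i rho))))).
Proof.
move=> rho_r /andP[]; case: i => [|n] // _ nr /=.
have n0 : (n < size rho)%N by rewrite rho_r; lia.
have := cupi_vrho_cat (take n rho) (nth 0%N rho n) (drop n.+1 rho).
by rewrite (size_takel (ltnW n0)) -drop_nth // cat_take_drop (take_nth 0%N) // !cat_rcons.
Qed.

End Cup.

Section Xi.
Variables (F : fieldType) (q lam : F).
Hypotheses (qdiff : q - q^-1 != 0) (lam_neq0 : lam != 0).
Implicit Types (g : basis -> F).

Local Notation xi_adj := (adjoint (xi_basis q lam)).

Lemma qintb_1subn k :
  qintb q lam (1 - k%:Z) = (lam * q / q ^+ k - lam^-1 * q ^+ k / q) / (q - q^-1).
Proof.
have q0 := q_neq0 qdiff.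
rewrite /qintb expfzDr // opprB expfzDr // -exprnP -invr_expz -exprnP exprN1 expr1z.
by rewrite !mulrA.
Qed.

Lemma expr_double k : q ^+ (2 * k) = q ^+ k * q ^+ k.
Proof. by rewrite mulnC exprM expr2. Qed.

Lemma xi_adj_false g k js : xi_adj g (k, false :: js) =
  lam^-1 * (q ^+ k * q ^+ k) * g (k, false :: js) -
  q * (q - q^-1) * qint q k * qintb q lam (1 - k%:Z) * g (k.-1, true :: js).
Proof.
by rewrite /adjoint /xi_basis !vdot_cons /vdot big_nil addr0 /= mulNr expr_double.
Qed.

Lemma xi_adj_true g k js : xi_adj g (k, true :: js) =
  (lam^-1 + lam * q ^+ 2 - lam^-1 * (q * q * (q ^+ k * q ^+ k))) * g (k, true :: js) -
  lam^-1 * (q * q * (q ^+ k * q ^+ k)) * (q - q^-1) * g (k.+1, false :: js).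
Proof.
rewrite /adjoint /xi_basis !vdot_cons /vdot big_nil addr0 /= mulNr.
by rewrite mulnS exprD expr_double expr2.
Qed.

Lemma Fadj_xi_adj g c : (1 <= size c.2)%N -> Fadj q (xi_adj g) c = xi_adj (Fadj q g) c.
Proof.
have q0 := q_neq0 qdiff; have qq1 := sqr_q_sub1_neq0 qdiff.
case: c => k [|[] js] //= _.
- rewrite Fadj_E raise_sum_cons /= !xi_adj_true !Fadj_E !raise_sum_cons /=.
  rewrite (_ : (fun a => xi_adj g (k, true :: a)) = fun a =>
     (lam^-1 + lam * q ^+ 2 - lam^-1 * (q * q * (q ^+ k * q ^+ k))) * g (k, true :: a) +
     - (lam^-1 * (q * q * (q ^+ k * q ^+ k)) * (q - q^-1)) * g (k.+1, false :: a)); last first.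
    by apply: functional_extensionality => a; rewrite xi_adj_true mulNr.
  rewrite raise_sumD !raise_sum_scaler !Kw_cons !exprS.
  have := expf_neq0 k q0; move: (q ^+ k) => Q Q0.
  by field; rewrite q0 lam_neq0.
- rewrite Fadj_E raise_sum_cons /= !xi_adj_false !Fadj_E !raise_sum_cons /= xi_adj_true.
  rewrite (_ : (fun a => xi_adj g (k, false :: a)) = fun a =>
     lam^-1 * (q ^+ k * q ^+ k) * g (k, false :: a) +
     - (q * (q - q^-1) * qint q k * qintb q lam (1 - k%:Z)) * g (k.-1, true :: a)); last first.
    by apply: functional_extensionality => a; rewrite xi_adj_false mulNr.
  rewrite raise_sumD !raise_sum_scaler !Kw_cons !qintb_1subn /qint.
  case: k => [|k] /=.
    rewrite !expr0 !expr1 invr1 subrr !mul0r !mulr0.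
    by field; rewrite q0 lam_neq0 qq1.
  rewrite !exprS; have := expf_neq0 k q0; move: (q ^+ k) => Q Q0.
  by field; rewrite Q0 q0 lam_neq0 qq1.
Qed.

Lemma tens_adj_xi_adj g c : (1 <= size c.2)%N ->
  tens_adj false (xi_adj g) c = xi_adj (tens_adj false g) c.
Proof. by case: c => k [|[] js] //= _; rewrite /tens_adj /= ?xi_adj_true ?xi_adj_false. Qed.

Lemma xi_id_vrho_cons b0 b1 s :
  veq (xi_id q lam (vrho q [:: b0, b1 & s]))
      (vadd (vscale (lam^-1 * q ^+ b0 - lam * q * qint q b0) (vrho q [:: 0%N, (b0 + b1)%N & s]))
            (vscale (lam * q ^+ 2 * qint q b0) (vrho q [:: 1%N, (b0 + b1).-1 & s]))).
Proof.
have q0 := q_neq0 qdiff; have qq1 := sqr_q_sub1_neq0 qdiff.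
apply: veq_vdot => g; rewrite vdot_cat !vdot_scale vdot_lin !vdot_vrho !iter_Fadj_nil /=.
rewrite /tens_adj /= !add0n (iter_tail_adj_T (@Fadj_xi_adj) (@tens_adj_xi_adj)) // xi_adj_false.
rewrite !(iter_Fadj_single0 qdiff) iter_Fadj_single1 qintb_1subn.
case: b0 => [|b0]; case: b1 => [|b1]; rewrite /= ?add0n ?addn0 ?addSn ?addnS /= ?add0n.
- by rewrite qint0 !expr0; ring.
- by rewrite qint0 !expr0; ring.
- case: b0 => [|b0] /=; rewrite /qint !exprVn !expr0 ?expr1 !exprS;
    by field; rewrite ?q0 ?lam_neq0 ?qq1 ?expf_neq0 ?oner_neq0.
- rewrite /qint !exprVn !exprS !exprD.
  by field; rewrite ?q0 ?lam_neq0 ?qq1 ?expf_neq0 ?oner_neq0.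
Qed.

Lemma xi_id_vrho r rho :
  size rho = r.+1 -> (1 <= r)%N ->
  let b0 := nth 0%N rho 0 in let b1 := nth 0%N rho 1 in
  veq (xi_id q lam (vrho q rho))
      (vadd (vscale (lam^-1 * q ^+ b0 - lam * q * qint q b0)
               (vrho q (0%N :: (b0 + b1)%N :: drop 2 rho)))
            (vscale (lam * q ^+ 2 * qint q b0)
               (vrho q (1%N :: (b0 + b1).-1 :: drop 2 rho)))).
Proof.
case: rho => [|b0 [|b1 s]] //= [<-] // _.
by rewrite drop0; apply: xi_id_vrho_cons.
Qed.

End Xi.

Lemma subr_invr_neq0 (F : fieldType) (x : F) : x != 0 -> x * x != 1 -> x - x^-1 != 0.
Proof.
move=> x0; apply: contraNneq => xV; rewrite -subr_eq0.
have -> : x * x - 1 = (x - x^-1) * x by field.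
by rewrite xV mul0r.
Qed.

Lemma qv_diff : qv - qv^-1 != 0.
Proof.
apply: subr_invr_neq0; first by rewrite /qv tofrac_eq0 polyC_eq0 polyX_eq0.
rewrite /qv -tofracM -tofrac1 tofrac_eq -polyCM -polyC1 (inj_eq polyC_inj).
by apply/eqP => /(congr1 (horner^~ 0)); rewrite !hornerE => /eqP; rewrite eq_sym oner_eq0.
Qed.

Lemma lamv_neq0 : lamv != 0.
Proof. by rewrite /lamv tofrac_eq0 polyX_eq0. Qed.

Theorem lemma2p4 :
  (* (1) cap_i *)
  (forall (r : nat) (rho : seq nat) (i : nat),
     size rho = r.+1 -> (2 <= r)%N -> (1 <= i <= r - 1)%N ->
     veq (capi qv i (vrho qv rho))
         (vscale (- qv^-1 * qint qv (nth 0%N rho i))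
            (vrho qv (take i.-1 rho ++
               (nth 0%N rho i.-1 + nth 0%N rho i + nth 0%N rho i.+1).-1
                 :: drop i.+2 rho)))) /\
  (* (2) cup_i *)
  (forall (r : nat) (rho : seq nat) (i : nat),
     size rho = r.+1 -> (1 <= i <= r + 1)%N ->
     veq (cupi qv i (vrho qv rho))
         (vadd (vscale (qv * qint qv 2) (vrho qv (take i rho ++ 1%N :: 0%N :: drop i rho)))
         (vadd (vscale (- qv) (vrho qv (take i.-1 rho ++
                                (nth 0%N rho i.-1).+1 :: 0%N :: 0%N :: drop i rho)))
               (vscale (- qv) (vrho qv (take i rho ++ 0%N :: 1%N :: drop i rho)))))) /\
  (* (3) xi (x) id *)
  (forall (r : nat) (rho : seq nat),
     size rho = r.+1 -> (1 <= r)%N ->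
     let b0 := nth 0%N rho 0 in let b1 := nth 0%N rho 1 in
     veq (xi_id qv lamv (vrho qv rho))
         (vadd (vscale (lamv^-1 * qv ^+ b0 - lamv * qv * qint qv b0)
                  (vrho qv (0%N :: (b0 + b1)%N :: drop 2 rho)))
               (vscale (lamv * qv ^+ 2 * qint qv b0)
                  (vrho qv (1%N :: (b0 + b1).-1 :: drop 2 rho))))).
Proof.
split; [|split].
- exact: capi_vrho qv_diff.
- exact: cupi_vrho qv_diff.
- exact: xi_id_vrho qv_diff lamv_neq0.
Qed.
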